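(* Let $G$ be a group, $A$ a semilattice of groups and $\Theta=(\theta,w)$ a twisted partial action of $G$ on $A$. Then $A*_\Theta G$, with $i(a)=a\delta_1$ and $j(a\delta_x)=x$, is an extension of $A$ by $G$. Moreover, the maps $\pi:A*_\Theta G\to E(A)*_\theta G$, $\pi(a\delta_x)=aa^{-1}\delta_x$, and $\kappa:E(A)*_\theta G\to G$, $\kappa(e\delta_x)=x$, are epimorphisms such that $A\overset{i}{\to}A*_\Theta G\overset{\pi}{\to}E(A)*_\theta G$ is an extension of $A$ by $E(A)*_\theta G$ and $j=\kappa\circ\pi$ (so $E(A)*_\theta G$ is, up to isomorphism, the $E$-unitary inverse semigroup associated with the extension $A*_\Theta G$ of $A$ by $G$).
   Context: A semilattice of groups is an inverse semigroup $A$ with central idempotents. A multiplier of a semigroup $T$ is a pair $(L,R)$ of maps $T\to T$ with $L(st)=L(s)t$, $R(st)=sR(t)$, $sL(t)=R(s)t$, written $ws=L(s)$, $sw=R(s)$; they form a monoid $\mathcal M(T)$ with unit group $\mathcal U(\mathcal M(T))$. A twisted partial action of $G$ on $A$ is $\Theta=(\theta,w)$ with isomorphisms $\theta_x:D_{x^{-1}}\to D_x$ between nonempty ideals and $w_{x,y}\in\mathcal U(\mathcal M(D_xD_{xy}))$ such that (i) $D_x^2=D_x$, $D_xD_y=D_yD_x$; (ii) $D_1=A$, $\theta_1=\mathrm{id}$; (iii) $\theta_x(D_{x^{-1}}D_y)=D_xD_{xy}$; (iv) $\theta_x\theta_y(s)=w_{x,y}\theta_{xy}(s)w_{x,y}^{-1}$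 for $s\in D_{y^{-1}}D_{y^{-1}x^{-1}}$; (v) $w_{1,x}=w_{x,1}$ = identity of $D_x$; (vi) $\theta_x(sw_{y,z})w_{x,yz}=\theta_x(s)w_{x,y}w_{xy,z}$ for $s\in D_{x^{-1}}D_yD_{yz}$. The crossed product $A*_\Theta G=\{a\delta_x: a\in D_x\}$ has product $a\delta_x\cdot b\delta_y=\theta_x(\theta_x^{-1}(a)b)w_{x,y}\delta_{xy}$. The maps $\theta_x$ restrict to isomorphisms $E(D_{x^{-1}})\to E(D_x)$ forming a partial action $\theta$ of $G$ on $E(A)$, and $E(A)*_\theta G=\{e\delta_x: e\in E(D_x)\}$ with $e\delta_x\cdot f\delta_y=\theta_x(\theta_x^{-1}(e)f)\delta_{xy}$. An extension of $A$ by a group $G$: inverse semigroup $U$, monomorphism $i:A\to U$, epimorphism $j:U\to G$ with $i(A)=j^{-1}(1)$. An extension of $A$ by an inverse semigroup $S$: inverse semigroup $U$, monomorphism $i:A\to U$, idempotent-separating epimorphism $\pi:U\to S$ with $i(A)=\pi^{-1}(E(S))$. *)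

Set Implicit Arguments.

Definition full (T : Type) : T -> Prop := fun _ => True.
Arguments full T _ : clear implicits.

Definition setprod {A : Type} (mul : A -> A -> A) (P Q : A -> Prop) : A -> Prop :=
  fun c => exists a b, P a /\ Q b /\ c = mul a b.

Definition seteq {A : Type} (P Q : A -> Prop) : Prop := forall a, P a <-> Q a.

Definition setimage {A B : Type} (f : A -> B) (P : A -> Prop) : B -> Prop :=
  fun b => exists a, P a /\ b = f a.

Definition IsGroup (G : Type) (mul : G -> G -> G) (one : G) (inv : G -> G) : Prop :=
  (forall x y z, mul (mul x y) z = mul x (mul y z)) /\
  (forall x, mul one x = x) /\ (forall x, mul x one = x) /\
  (forall x, mul (inv x) x = one) /\ (forall x, mul x (inv x) = one).

Definition IsInvSemigroupOn {T : Type} (S : T -> Prop) (mul : T -> T -> T) : Prop :=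
  (forall a b, S a -> S b -> S (mul a b)) /\
  (forall a b c, S a -> S b -> S c -> mul (mul a b) c = mul a (mul b c)) /\
  (forall a, S a -> exists b, S b /\ mul (mul a b) a = a /\ mul (mul b a) b = b /\
       (forall b', S b' -> mul (mul a b') a = a -> mul (mul b' a) b' = b' -> b' = b)).

Definition IsIdempotentOn {T : Type} (S : T -> Prop) (mul : T -> T -> T) (e : T) : Prop :=
  S e /\ mul e e = e.

Definition IsSemilatticeOfGroups (A : Type) (mul : A -> A -> A) : Prop :=
  IsInvSemigroupOn (full A) mul /\
  (forall e a, mul e e = e -> mul e a = mul a e).

Definition IsHomOn {T U : Type} (S : T -> Prop) (mulT : T -> T -> T)
  (S' : U -> Prop) (mulU : U -> U -> U) (f : T -> U) : Prop :=
  (forall a, S a -> S' (f a)) /\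
  (forall a b, S a -> S b -> f (mulT a b) = mulU (f a) (f b)).

Definition IsMonoOn {T U : Type} (S : T -> Prop) (mulT : T -> T -> T)
  (S' : U -> Prop) (mulU : U -> U -> U) (f : T -> U) : Prop :=
  IsHomOn S mulT S' mulU f /\ (forall a b, S a -> S b -> f a = f b -> a = b).

Definition IsEpiOn {T U : Type} (S : T -> Prop) (mulT : T -> T -> T)
  (S' : U -> Prop) (mulU : U -> U -> U) (f : T -> U) : Prop :=
  IsHomOn S mulT S' mulU f /\ (forall b, S' b -> exists a, S a /\ f a = b).

Definition IsIdempotentSeparatingOn {T U : Type} (S : T -> Prop) (mulT : T -> T -> T)
  (f : T -> U) : Prop :=
  forall e e', IsIdempotentOn S mulT e -> IsIdempotentOn S mulT e' -> f e = f e' -> e = e'.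

Definition IsExtensionByGroup {A U G : Type} (mulA : A -> A -> A)
  (SU : U -> Prop) (mulU : U -> U -> U) (mulG : G -> G -> G) (oneG : G)
  (i : A -> U) (j : U -> G) : Prop :=
  IsInvSemigroupOn SU mulU /\
  IsMonoOn (full A) mulA SU mulU i /\
  IsEpiOn SU mulU (full G) mulG j /\
  (forall u, SU u -> (j u = oneG <-> exists a, i a = u)).

Definition IsExtensionByInvSemigroup {A U S : Type} (mulA : A -> A -> A)
  (SU : U -> Prop) (mulU : U -> U -> U) (SS : S -> Prop) (mulS : S -> S -> S)
  (i : A -> U) (pi : U -> S) : Prop :=
  IsInvSemigroupOn SU mulU /\
  IsInvSemigroupOn SS mulS /\
  IsMonoOn (full A) mulA SU mulU i /\
  IsEpiOn SU mulU SS mulS pi /\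
  IsIdempotentSeparatingOn SU mulU pi /\
  (forall u, SU u -> (IsIdempotentOn SS mulS (pi u) <-> exists a, i a = u)).

(* (L,R) is a multiplier of the subsemigroup T of (A, mul); w s = L s, s w = R s *)
Definition IsMultiplierOn {A : Type} (mul : A -> A -> A) (T : A -> Prop)
  (L R : A -> A) : Prop :=
  (forall s, T s -> T (L s)) /\ (forall s, T s -> T (R s)) /\
  (forall s t, T s -> T t -> L (mul s t) = mul (L s) t) /\
  (forall s t, T s -> T t -> R (mul s t) = mul s (R t)) /\
  (forall s t, T s -> T t -> mul s (L t) = mul (R s) t).

(* (L,R) is a unit of the monoid M(T) with inverse (L',R');
   the product in M(T) is (L1,R1)(L2,R2) = (L1 o L2, R2 o R1), unit (id,id). *)
Definition IsUnitMultiplierOn {A : Type} (mul : A -> A -> A) (T : A -> Prop)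
  (L R L' R' : A -> A) : Prop :=
  IsMultiplierOn mul T L R /\ IsMultiplierOn mul T L' R' /\
  (forall s, T s -> L (L' s) = s /\ L' (L s) = s /\ R (R' s) = s /\ R' (R s) = s).

(* Data: D x (ideal D_x), th x (= theta_x, meaningful on D_{x^-1}),
   thi x (= theta_x^{-1}, meaningful on D_x), w_{x,y} = (wL x y, wR x y)
   with inverse w_{x,y}^{-1} = (wiL x y, wiR x y). *)
Definition IsTwistedPartialAction (G A : Type) (mulG : G -> G -> G) (oneG : G)
  (invG : G -> G) (mulA : A -> A -> A) (D : G -> A -> Prop)
  (th thi : G -> A -> A) (wL wR wiL wiR : G -> G -> A -> A) : Prop :=
  (forall x, exists a, D x a) /\
  (forall x a b, D x a -> D x (mulA a b) /\ D x (mulA b a)) /\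
  (forall x a, D (invG x) a -> D x (th x a)) /\
  (forall x a, D x a -> D (invG x) (thi x a)) /\
  (forall x a, D (invG x) a -> thi x (th x a) = a) /\
  (forall x a, D x a -> th x (thi x a) = a) /\
  (forall x a b, D (invG x) a -> D (invG x) b ->
      th x (mulA a b) = mulA (th x a) (th x b)) /\
  (forall x y, IsUnitMultiplierOn mulA (setprod mulA (D x) (D (mulG x y)))
                 (wL x y) (wR x y) (wiL x y) (wiR x y)) /\
  (forall x, seteq (setprod mulA (D x) (D x)) (D x)) /\
  (forall x y, seteq (setprod mulA (D x) (D y)) (setprod mulA (D y) (D x))) /\
  (forall a, D oneG a) /\ (forall a, th oneG a = a) /\
  (* (iii) *)
  (forall x y, seteq (setimage (th x) (setprod mulA (D (invG x)) (D y)))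
                     (setprod mulA (D x) (D (mulG x y)))) /\
  (* (iv)  theta_x theta_y (s) = (w_{x,y} theta_{xy}(s)) w_{x,y}^{-1} *)
  (forall x y s, setprod mulA (D (invG y)) (D (mulG (invG y) (invG x))) s ->
      th x (th y s) = wiR x y (wL x y (th (mulG x y) s))) /\
  (forall x s, D x s ->
      wL oneG x s = s /\ wR oneG x s = s /\ wL x oneG s = s /\ wR x oneG s = s) /\
  (* (vi) theta_x(s w_{y,z}) w_{x,yz} = theta_x(s) w_{x,y} w_{xy,z} *)
  (forall x y z s,
      setprod mulA (setprod mulA (D (invG x)) (D y)) (D (mulG y z)) s ->
      wR x (mulG y z) (th x (wR y z s)) = wR (mulG x y) z (wR x y (th x s))).

(* A *_Theta G = { a delta_x | a in D_x } *)
Definition CP {G A : Type} (D : G -> A -> Prop) : A * G -> Prop :=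
  fun p => D (snd p) (fst p).

(* a delta_x . b delta_y = theta_x(theta_x^{-1}(a) b) w_{x,y} delta_{xy} *)
Definition cp_mul {G A : Type} (mulG : G -> G -> G) (mulA : A -> A -> A)
  (th thi : G -> A -> A) (wR : G -> G -> A -> A) (p q : A * G) : A * G :=
  (wR (snd p) (snd q) (th (snd p) (mulA (thi (snd p) (fst p)) (fst q))),
   mulG (snd p) (snd q)).

(* E(A) *_theta G = { e delta_x | e in E(D_x) } *)
Definition ECP {G A : Type} (mulA : A -> A -> A) (D : G -> A -> Prop) : A * G -> Prop :=
  fun p => D (snd p) (fst p) /\ mulA (fst p) (fst p) = fst p.

Definition ecp_mul {G A : Type} (mulG : G -> G -> G) (mulA : A -> A -> A)
  (th thi : G -> A -> A) (p q : A * G) : A * G :=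
  (th (snd p) (mulA (thi (snd p) (fst p)) (fst q)), mulG (snd p) (snd q)).

Definition cp_i {G A : Type} (oneG : G) (a : A) : A * G := (a, oneG).
Definition cp_j {G A : Type} (p : A * G) : G := snd p.
Definition cp_pi {G A : Type} (mulA : A -> A -> A) (invA : A -> A) (p : A * G) : A * G :=
  (mulA (fst p) (invA (fst p)), snd p).
Definition cp_kappa {G A : Type} (p : A * G) : G := snd p.

From Stdlib Require Import FunctionalExtensionality PropExtensionality.

(* Associativity of a δ_x · b δ_y = θ_x(θ_x^{-1}(a) b) w_{x,y} δ_{xy} follows from the
   cocycle identity (vi) on one side and from (iv) on the other, once θ_x^{-1}(a) b has been
   pulled back along θ_y using (iii). The idempotents of A *_Θ G are the e δ_1 with e ∈ E(A),
   which commute because E(A) is central, and a δ_x has the inverse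
   θ_x^{-1}(a)^{-1} θ_x^{-1}(a a^{-1} w_{x,x^{-1}}^{-1}) δ_{x^{-1}}; so A *_Θ G is an inverse
   semigroup. Unit multipliers and the θ_x preserve a a^{-1}, hence π is a homomorphism; it
   retracts A *_Θ G onto E(A) *_θ G, which therefore is an inverse semigroup as well. Finally
   j(a δ_x) = 1 and π(a δ_x) ∈ E(E(A) *_θ G) both mean x = 1, i.e. a δ_x ∈ i(A). *)

Set Implicit Arguments.

Lemma inv_semigroup_of_regular {T : Type} (S : T -> Prop) (mul : T -> T -> T) :
  (forall a b, S a -> S b -> S (mul a b)) ->
  (forall a b c, S a -> S b -> S c -> mul (mul a b) c = mul a (mul b c)) ->
  (forall e f, S e -> S f -> mul e e = e -> mul f f = f -> mul e f = mul f e) ->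
  (forall a, S a -> exists b, S b /\ mul (mul a b) a = a /\ mul (mul b a) b = b) ->
  IsInvSemigroupOn S mul.
Proof.
  intros Hcl Has Hcom Hreg. split; [exact Hcl | split; [exact Has |]].
  intros a Ha. destruct (Hreg a Ha) as [b [Hb [Hab Hba]]].
  exists b. split; [exact Hb | split; [exact Hab | split; [exact Hba |]]].
  intros c Hc Hac Hca.
  (* b = (ba)(ca)b = (ca)(ba)b = cab  and  c = c(ab)(ac) = c(ac)(ab) = cab *)
  assert (Iba : mul (mul b a) (mul b a) = mul b a) by (rewrite <- Has, Hba; auto).
  assert (Ica : mul (mul c a) (mul c a) = mul c a) by (rewrite <- Has, Hca; auto).
  assert (Iab : mul (mul a b) (mul a b) = mul a b) by (rewrite <- Has, Hab; auto).
  assert (Iac : mul (mul a c) (mul a c) = mul a c) by (rewrite <- Has, Hac; auto).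
  assert (Eb : b = mul (mul c a) b).
  { transitivity (mul (mul (mul b a) (mul c a)) b).
    - rewrite (Has b a (mul c a)), <- (Has a c a), Hac, Hba; auto.
    - rewrite (Hcom (mul b a) (mul c a)), (Has (mul c a) (mul b a) b), Hba; auto. }
  assert (Ec : c = mul (mul c a) b).
  { transitivity (mul c (mul (mul a b) (mul a c))).
    - rewrite <- (Has (mul a b) a c), Hab, <- (Has c a c), Hca; auto.
    - rewrite (Hcom (mul a b) (mul a c)), <- (Has c (mul a c) (mul a b)), <- (Has c a c),
        Hca, (Has c a b); auto. }
  congruence.
Qed.

Lemma inv_semigroup_retract {T : Type} (S S' : T -> Prop) (mul mul' : T -> T -> T) (f : T -> T) :
  IsInvSemigroupOn S mul -> (forall p, S' p -> S p) -> IsHomOn S mul S' mul' f ->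
  (forall p, S' p -> f p = p) ->
  (forall e e', S' e -> S' e' -> mul' e e = e -> mul' e' e' = e' -> mul' e e' = mul' e' e) ->
  IsInvSemigroupOn S' mul'.
Proof.
  intros (Hcl & Has & Hinv) Hsub [Hin Hhom] Hfix Hcom.
  assert (Hff : forall u v, S u -> S v -> mul' (f u) (f v) = f (mul u v)).
  { intros. symmetry. apply Hhom; assumption. }
  apply inv_semigroup_of_regular; [| | exact Hcom |].
  - intros p q Hp Hq. rewrite <- (Hfix p), <- (Hfix q), Hff by auto. apply Hin, Hcl; auto.
  - intros p q r Hp Hq Hr.
    rewrite <- (Hfix p), <- (Hfix q), <- (Hfix r), !Hff, Has by auto. reflexivity.
  - intros p Hp. destruct (Hinv p (Hsub p Hp)) as (q & Hq & Hpqp & Hqpq & _).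
    exists (f q). split; [apply Hin, Hq | split].
    + rewrite <- (Hfix p) at 1 2 by exact Hp. rewrite !Hff, Hpqp by auto. apply Hfix, Hp.
    + rewrite <- (Hfix p) by exact Hp. rewrite !Hff, Hqpq by auto. reflexivity.
Qed.

Section CrossedProduct.

Variables (A : Type) (mulA : A -> A -> A) (invA : A -> A).
Hypothesis HA : IsSemilatticeOfGroups mulA.
Hypothesis HinvA : forall a, mulA (mulA a (invA a)) a = a /\
                     mulA (mulA (invA a) a) (invA a) = invA a.

Local Infix "**" := mulA (at level 40, left associativity).
Local Notation "a ^-1" := (invA a) (at level 2, left associativity, format "a ^-1").
Local Notation E a := (a ** a^-1) (only parsing).

(** * Semilattices of groups and their multipliers *)

Lemma mulaA a b c : a ** b ** c = a ** (b ** c).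
Proof. apply HA; exact I. Qed.

Lemma idem_central e : e ** e = e -> forall a, e ** a = a ** e.
Proof. intros He a. apply HA, He. Qed.

Lemma inva_unique a b : a ** b ** a = a -> b ** a ** b = b -> b = a^-1.
Proof.
  intros Hab Hba. destruct HA as [[_ [_ Hinv]] _].
  destruct (Hinv a I) as [b0 [_ [_ [_ Hb0]]]].
  rewrite (Hb0 b I Hab Hba). symmetry. apply Hb0; [exact I | apply HinvA | apply HinvA].
Qed.

Lemma mulaVa a : a ** a^-1 ** a = a. Proof. apply HinvA. Qed.
Lemma mulVaV a : a^-1 ** a ** a^-1 = a^-1. Proof. apply HinvA. Qed.

Lemma idem_mulaV a : E a ** E a = E a.
Proof. rewrite <- mulaA, mulaVa. reflexivity. Qed.

Lemma idem_mulVa a : a^-1 ** a ** (a^-1 ** a) = a^-1 ** a.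
Proof. rewrite <- mulaA, mulVaV. reflexivity. Qed.

Lemma mulaV_comm a : a ** a^-1 = a^-1 ** a.
Proof.
  assert (H1 : a ** a^-1 = (a^-1 ** a) ** (a ** a^-1)).
  { rewrite <- (mulaVa a) at 1. rewrite (mulaA a a^-1 a), <- (idem_central (idem_mulVa a)).
    rewrite !mulaA. reflexivity. }
  assert (H2 : a^-1 ** a = (a ** a^-1) ** (a^-1 ** a)).
  { rewrite <- (mulVaV a) at 1. rewrite (mulaA a^-1 a a^-1), <- (idem_central (idem_mulaV a)).
    rewrite !mulaA. reflexivity. }
  rewrite H1, (idem_central (idem_mulVa a)), <- H2. reflexivity.
Qed.

Ltac assoc_eq := repeat rewrite mulaA; reflexivity.

Lemma mulEa a : E a ** a = a. Proof. apply mulaVa. Qed.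
Lemma mulaE a : a ** E a = a. Proof. rewrite mulaV_comm, <- mulaA. apply mulaVa. Qed.
Lemma mulVE a : a^-1 ** E a = a^-1. Proof. rewrite <- mulaA. apply mulVaV. Qed.
Lemma mulEV a : E a ** a^-1 = a^-1. Proof. rewrite mulaV_comm. apply mulVaV. Qed.

Lemma inva_idem e : e ** e = e -> e^-1 = e.
Proof. intro He. symmetry. apply inva_unique; rewrite !He; reflexivity. Qed.

Lemma invaM a b : (a ** b)^-1 = b^-1 ** a^-1.
Proof.
  symmetry. apply inva_unique.
  - transitivity (a ** (E b ** (a^-1 ** a)) ** b); [assoc_eq |].
    rewrite (idem_central (idem_mulaV b)).
    transitivity (E a ** a ** (E b ** b)); [assoc_eq |].
    rewrite !mulEa. reflexivity.
  - transitivity (b^-1 ** ((a^-1 ** a) ** E b) ** a^-1); [assoc_eq |].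
    rewrite <- (idem_central (idem_mulaV b)), <- mulaV_comm.
    transitivity ((b^-1 ** E b) ** (E a ** a^-1)); [assoc_eq |].
    rewrite mulVE, mulEV. reflexivity.
Qed.

Lemma E_mul a b : E (a ** b) = E a ** E b.
Proof.
  rewrite invaM. transitivity (a ** E b ** a^-1); [assoc_eq |].
  rewrite mulaA, (idem_central (idem_mulaV b)), <- mulaA. reflexivity.
Qed.

Lemma E_idem e : e ** e = e -> E e = e.
Proof. intro He. rewrite (inva_idem He). exact He. Qed.

Lemma E_E a : E (E a) = E a.
Proof. apply E_idem, idem_mulaV. Qed.

Lemma E_antisym a b : a = E b ** a -> b = E a ** b -> E a = E b.
Proof.
  intros Ha Hb.
  assert (Ea : E a = E (E b ** a)) by (rewrite <- Ha; reflexivity).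
  assert (Eb : E b = E (E a ** b)) by (rewrite <- Hb; reflexivity).
  rewrite E_mul, E_E in Ea, Eb.
  rewrite Ea, (idem_central (idem_mulaV b)). symmetry. exact Eb.
Qed.

Definition IsIdeal (I : A -> Prop) : Prop := forall a b, I a -> I (a ** b) /\ I (b ** a).

Section Ideals.
Variable I : A -> Prop.
Hypothesis HI : IsIdeal I.

Lemma ideal_mulr a b : I a -> I (a ** b). Proof. apply HI. Qed.
Lemma ideal_mull a b : I a -> I (b ** a). Proof. apply HI. Qed.
Lemma ideal_E a : I a -> I (E a). Proof. apply ideal_mulr. Qed.
Lemma ideal_inv a : I a -> I a^-1.
Proof. intro Ha. rewrite <- mulVaV. apply ideal_mulr, ideal_mull, Ha. Qed.

Lemma ideal_meet J : IsIdeal J -> IsIdeal (fun s => I s /\ J s).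
Proof. intros HJ a b [Ha Ha']. destruct (HI b Ha), (HJ a b Ha'). tauto. Qed.

Lemma setprod_ideal J : IsIdeal J -> setprod mulA I J = (fun s => I s /\ J s).
Proof.
  intro HJ. extensionality s. apply propositional_extensionality. split.
  - intros (a & b & Ha & Hb & ->). split; [apply ideal_mulr | apply HJ]; assumption.
  - intros [Hs Hs']. exists (E s), s. split; [apply ideal_E, Hs | split; [exact Hs' |]].
    symmetry. apply mulEa.
Qed.
End Ideals.

Section Multipliers.
Variable T : A -> Prop.
Hypothesis HT : IsIdeal T.

Lemma multiplierR_mull L R : IsMultiplierOn mulA T L R -> forall a s, T s -> R (a ** s) = a ** R s.
Proof.
  intros (_ & _ & _ & HR & _) a s Hs.
  assert (HEs : T (E s)) by exact (ideal_E HT s Hs).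
  assert (HaEs : T (a ** E s)) by exact (ideal_mull HT _ a HEs).
  replace (a ** s) with ((a ** E s) ** s) by (rewrite mulaA, mulEa; reflexivity).
  rewrite (HR _ _ HaEs Hs), mulaA, <- (HR _ _ HEs Hs), mulEa. reflexivity.
Qed.

Lemma multiplierL_mulr L R : IsMultiplierOn mulA T L R -> forall a s, T s -> L (s ** a) = L s ** a.
Proof.
  intros (_ & _ & HL & _ & _) a s Hs.
  assert (HEs : T (E s)) by exact (ideal_E HT s Hs).
  assert (HEsa : T (E s ** a)) by exact (ideal_mulr HT _ a HEs).
  replace (s ** a) with (s ** (E s ** a)) by (rewrite <- mulaA, mulaE; reflexivity).
  rewrite (HL _ _ Hs HEsa), <- mulaA, <- (HL _ _ Hs HEs), mulaE. reflexivity.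
Qed.

Lemma multiplierLR_idem L R e : IsMultiplierOn mulA T L R -> T e -> e ** e = e -> L e = R e.
Proof.
  intros (_ & _ & HL & HR & Hmid) He Hee.
  rewrite <- Hee at 1. rewrite (HL _ _ He He), <- (idem_central Hee), (Hmid _ _ He He),
    <- (idem_central Hee), <- (HR _ _ He He), Hee. reflexivity.
Qed.

Lemma unit_multiplierR_E L R L' R' s :
  IsMultiplierOn mulA T L R -> IsMultiplierOn mulA T L' R' -> T s -> R' (R s) = s ->
  E (R s) = E s.
Proof.
  intros HM HM' Hs HRR. apply E_antisym.
  - rewrite <- (multiplierR_mull HM), mulEa by exact Hs. reflexivity.
  - rewrite <- HRR at 1. rewrite <- (mulEa (R s)) at 1.
    rewrite (multiplierR_mull HM'), HRR by (apply HM, Hs). reflexivity.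
Qed.

Lemma unit_multiplierL_E L R L' R' s :
  IsMultiplierOn mulA T L R -> IsMultiplierOn mulA T L' R' -> T s -> L' (L s) = s ->
  E (L s) = E s.
Proof.
  intros HM HM' Hs HLL. apply E_antisym.
  - rewrite (idem_central (idem_mulaV s)), <- (multiplierL_mulr HM), mulaE by exact Hs.
    reflexivity.
  - rewrite (idem_central (idem_mulaV (L s))).
    rewrite <- HLL at 1. rewrite <- (mulaE (L s)) at 1.
    rewrite (multiplierL_mulr HM'), HLL by (apply HM, Hs). reflexivity.
Qed.
End Multipliers.

(** * Twisted partial actions *)

Variables (G : Type) (mulG : G -> G -> G) (oneG : G) (invG : G -> G).
Hypothesis HG : IsGroup mulG oneG invG.

Lemma mulgA x y z : mulG (mulG x y) z = mulG x (mulG y z). Proof. apply HG. Qed.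
Lemma mul1g x : mulG oneG x = x. Proof. apply HG. Qed.
Lemma mulg1 x : mulG x oneG = x. Proof. apply HG. Qed.
Lemma mulVg x : mulG (invG x) x = oneG. Proof. apply HG. Qed.
Lemma mulgV x : mulG x (invG x) = oneG. Proof. apply HG. Qed.

Lemma invg_unique x y : mulG x y = oneG -> y = invG x.
Proof. intro H. rewrite <- (mul1g y), <- (mulVg x), mulgA, H, mulg1. reflexivity. Qed.

Lemma idemg_eq1 x : mulG x x = x -> x = oneG.
Proof.
  intro H. rewrite <- (mulVg x). rewrite <- H at 3. rewrite <- mulgA, mulVg. symmetry. apply mul1g.
Qed.

Lemma invg1 : invG oneG = oneG.
Proof. symmetry. apply invg_unique, mul1g. Qed.

Lemma invgK x : invG (invG x) = x.
Proof. symmetry. apply invg_unique, mulVg. Qed.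

Lemma invgM x y : invG (mulG x y) = mulG (invG y) (invG x).
Proof. symmetry. apply invg_unique. rewrite mulgA, <- (mulgA y), mulgV, mul1g. apply mulgV. Qed.

Lemma mulKVg x y : mulG x (mulG (invG x) y) = y.
Proof. rewrite <- mulgA, mulgV. apply mul1g. Qed.

Variables (D : G -> A -> Prop) (th thi : G -> A -> A) (wL wR wiL wiR : G -> G -> A -> A).
Hypothesis HT : IsTwistedPartialAction mulG oneG invG mulA D th thi wL wR wiL wiR.

Ltac unpack_action := destruct HT as
  (Hne & Hid & Hth & Hthi & HthK & HthiK & HthM & Hw & Hidem & Hcomm &
   HD1 & Hth1 & Hiii & Hiv & Hv & Hvi).

Lemma D_ideal x : IsIdeal (D x). Proof. unpack_action. exact (Hid x). Qed.

Lemma D_mulr x a b : D x a -> D x (a ** b). Proof. apply ideal_mulr, D_ideal. Qed.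
Lemma D_mull x a b : D x a -> D x (b ** a). Proof. apply ideal_mull, D_ideal. Qed.
Lemma D_E x a : D x a -> D x (E a). Proof. apply D_mulr. Qed.
Lemma D_inv x a : D x a -> D x a^-1. Proof. apply ideal_inv, D_ideal. Qed.

Lemma D_nonempty x : exists a, D x a. Proof. unpack_action. auto. Qed.
Lemma D1 a : D oneG a. Proof. unpack_action. auto. Qed.
Lemma D_th x a : D (invG x) a -> D x (th x a). Proof. unpack_action. auto. Qed.
Lemma D_thi x a : D x a -> D (invG x) (thi x a). Proof. unpack_action. auto. Qed.
Lemma thK x a : D (invG x) a -> thi x (th x a) = a. Proof. unpack_action. auto. Qed.
Lemma thiK x a : D x a -> th x (thi x a) = a. Proof. unpack_action. auto. Qed.
Lemma thM x a b : D (invG x) a -> D (invG x) b -> th x (a ** b) = th x a ** th x b.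
Proof. unpack_action. auto. Qed.
Lemma th1 a : th oneG a = a. Proof. unpack_action. auto. Qed.

Lemma thi1 a : thi oneG a = a.
Proof. rewrite <- (th1 a) at 1. apply thK. rewrite invg1. apply D1. Qed.

Lemma w_unit x y : IsUnitMultiplierOn mulA (fun s => D x s /\ D (mulG x y) s)
  (wL x y) (wR x y) (wiL x y) (wiR x y).
Proof. unpack_action. rewrite <- setprod_ideal; auto using D_ideal. Qed.

Lemma D_th_mul x y a : D (invG x) a -> D y a -> D x (th x a) /\ D (mulG x y) (th x a).
Proof.
  intros Ha Ha'. unpack_action. destruct (Hiii x y (th x a)) as [Himage _].
  rewrite !setprod_ideal in Himage by apply D_ideal.
  apply Himage. exists a. auto.
Qed.

Lemma D_thi_mul x y a : D x a -> D (mulG x y) a -> D (invG x) (thi x a) /\ D y (thi x a).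
Proof.
  intros Ha Ha'. unpack_action. destruct (Hiii x y a) as [_ Hpreimage].
  rewrite !setprod_ideal in Hpreimage by apply D_ideal.
  destruct (Hpreimage (conj Ha Ha')) as [t [[Ht Ht'] ->]]. rewrite thK; auto.
Qed.

Lemma th_th x y s : D (invG y) s -> D (mulG (invG y) (invG x)) s ->
  th x (th y s) = wiR x y (wL x y (th (mulG x y) s)).
Proof. intros. unpack_action. apply Hiv. rewrite setprod_ideal by apply D_ideal. auto. Qed.

Lemma wR1g x s : D x s -> wR oneG x s = s.
Proof. unpack_action. apply Hv. Qed.

Lemma wRg1 x s : D x s -> wR x oneG s = s.
Proof. unpack_action. apply Hv. Qed.

Lemma w_cocycle x y z s : D (invG x) s -> D y s -> D (mulG y z) s ->
  wR x (mulG y z) (th x (wR y z s)) = wR (mulG x y) z (wR x y (th x s)).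
Proof.
  intros. unpack_action. apply Hvi.
  rewrite (setprod_ideal (@D_ideal (invG x))), setprod_ideal by
    first [apply D_ideal | apply ideal_meet; apply D_ideal].
  auto.
Qed.

Section Twisting.
Variables x y : G.

Let Dxy s := D x s /\ D (mulG x y) s.

Let Dxy_ideal : IsIdeal Dxy.
Proof. apply ideal_meet; apply D_ideal. Qed.

Let wM := proj1 (w_unit x y).
Let wiM := proj1 (proj2 (w_unit x y)).

Lemma wR_in s : D x s -> D (mulG x y) s -> D x (wR x y s) /\ D (mulG x y) (wR x y s).
Proof. intros. apply wM. split; assumption. Qed.

Lemma wL_in s : D x s -> D (mulG x y) s -> D x (wL x y s) /\ D (mulG x y) (wL x y s).
Proof. intros. apply wM. split; assumption. Qed.

Lemma wiR_in s : D x s -> D (mulG x y) s -> D x (wiR x y s) /\ D (mulG x y) (wiR x y s).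
Proof. intros. apply wiM. split; assumption. Qed.

Lemma wiRK s : D x s -> D (mulG x y) s -> wR x y (wiR x y s) = s.
Proof. intros. apply (w_unit x y). split; assumption. Qed.

Lemma wRK s : D x s -> D (mulG x y) s -> wiR x y (wR x y s) = s.
Proof. intros. apply (w_unit x y). split; assumption. Qed.

Lemma wR_mull a s : D x s -> D (mulG x y) s -> wR x y (a ** s) = a ** wR x y s.
Proof. intros. apply (multiplierR_mull Dxy_ideal wM). split; assumption. Qed.

Lemma wL_mulr a s : D x s -> D (mulG x y) s -> wL x y (s ** a) = wL x y s ** a.
Proof. intros. apply (multiplierL_mulr Dxy_ideal wM). split; assumption. Qed.

Lemma wLR_idem e : D x e -> D (mulG x y) e -> e ** e = e -> wL x y e = wR x y e.
Proof. intros. apply (multiplierLR_idem wM); [split |]; assumption. Qed.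

Lemma wR_E s : D x s -> D (mulG x y) s -> E (wR x y s) = E s.
Proof.
  intros. apply (unit_multiplierR_E Dxy_ideal wM wiM); [split | apply wRK]; assumption.
Qed.

Lemma wL_E s : D x s -> D (mulG x y) s -> E (wL x y s) = E s.
Proof.
  intros. apply (unit_multiplierL_E Dxy_ideal wM wiM); [split |]; try assumption.
  apply (w_unit x y). split; assumption.
Qed.

Lemma wiR_E s : D x s -> D (mulG x y) s -> E (wiR x y s) = E s.
Proof.
  intros. apply (unit_multiplierR_E Dxy_ideal wiM wM); [split | apply wiRK]; assumption.
Qed.
End Twisting.

Lemma th_inv x a : D (invG x) a -> th x a^-1 = (th x a)^-1.
Proof.
  intro Ha. assert (Hai : D (invG x) a^-1) by (apply D_inv, Ha).
  assert (HaE : D (invG x) (a ** a^-1)) by (apply D_mulr, Ha).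
  assert (HEa : D (invG x) (a^-1 ** a)) by (apply D_mulr, Hai).
  apply inva_unique; rewrite <- !thM by assumption; [rewrite mulaVa | rewrite mulVaV]; reflexivity.
Qed.

Lemma th_E x a : D (invG x) a -> th x (E a) = E (th x a).
Proof. intro Ha. rewrite thM, th_inv by (try apply D_inv; exact Ha). reflexivity. Qed.

Lemma thi_E x a : D x a -> thi x (E a) = E (thi x a).
Proof.
  intro Ha. rewrite <- (thiK Ha) at 1 2.
  rewrite <- th_E, thK by (try apply D_E; apply D_thi, Ha). reflexivity.
Qed.

Lemma th_inv_idem x e : D x e -> e ** e = e -> th (invG x) e = thi x e.
Proof.
  intros He Hee.
  assert (Hthth : th x (th (invG x) e) = e).
  { rewrite th_th by (rewrite invgK; rewrite ?mulgV; auto using D1).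
    rewrite mulgV, th1, wLR_idem, wRK by (rewrite ?mulgV; auto using D1). reflexivity. }
  rewrite <- Hthth at 2. symmetry. apply thK, D_th. rewrite invgK. exact He.
Qed.

Lemma D_th_thi_mul x y a b : D x a -> D y b ->
  D x (th x (thi x a ** b)) /\ D (mulG x y) (th x (thi x a ** b)).
Proof. intros Ha Hb. apply D_th_mul; [apply D_mulr, D_thi, Ha | apply D_mull, Hb]. Qed.

Lemma D_th_mulg x y r : D (invG y) r -> D (mulG (invG y) (invG x)) r ->
  D x (th (mulG x y) r) /\ D (mulG x y) (th (mulG x y) r).
Proof.
  intros Hr Hr'. destruct (@D_th_mul (mulG x y) (invG y) r) as [Hxy Hx].
  - rewrite invgM. exact Hr'.
  - exact Hr.
  - rewrite mulgA, mulgV, mulg1 in Hx. split; assumption.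
Qed.

Lemma wR_th_th x y s : D (invG y) s -> D (mulG (invG y) (invG x)) s ->
  wR x y (th x (th y s)) = wL x y (th (mulG x y) s).
Proof.
  intros Hs Hs'. destruct (D_th_mulg Hs Hs') as [Hx Hxy].
  rewrite th_th by assumption. apply wiRK; apply wL_in; assumption.
Qed.

Lemma th_thi_wL_mul x y r c : D (invG y) r -> D (mulG (invG y) (invG x)) r ->
  th (mulG x y) (thi (mulG x y) (wL x y (th (mulG x y) r)) ** c) =
  wL x y (th (mulG x y) (r ** c)).
Proof.
  intros Hr Hr'.
  assert (Hrxy : D (invG (mulG x y)) r) by (rewrite invgM; exact Hr').
  destruct (D_th_mulg Hr Hr') as [Hv Hv']. set (v := th (mulG x y) r) in *.
  destruct (wL_in Hv Hv') as [HLv HLv'].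
  set (m := thi (mulG x y) (wL x y v)).
  assert (Hm : D (invG (mulG x y)) m) by (apply D_thi, HLv').
  assert (HEm : E m = E r).
  { unfold m. rewrite <- thi_E, wL_E by assumption. unfold v.
    rewrite <- th_E, thK by (try apply D_E; exact Hrxy). reflexivity. }
  assert (HEmc : D (invG (mulG x y)) (E m ** c)) by (apply D_mulr, D_E, Hm).
  rewrite <- (mulaE m), mulaA, thM by assumption.
  unfold m at 1. rewrite thiK by assumption. fold m.
  rewrite <- wL_mulr by assumption. unfold v. rewrite <- thM by assumption.
  rewrite HEm, <- mulaA, mulaE. reflexivity.
Qed.

Lemma th_factor x y a b : D (invG x) a -> D y b ->
  exists r, D (invG y) r /\ D (mulG (invG y) (invG x)) r /\
    th y r = a ** b /\ forall c, th y (r ** c) = a ** th y (thi y b ** c).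
Proof.
  intros Ha Hb. set (u := a ** E b).
  assert (Hu : D y u) by (apply D_mull, D_E, Hb).
  destruct (@D_thi_mul y (mulG (invG y) (invG x)) u Hu) as [Hu1 Hu2].
  { rewrite mulKVg. apply D_mulr, Ha. }
  set (b' := thi y b). assert (Hb' : D (invG y) b') by (apply D_thi, Hb).
  assert (HEb : th y (E b') = E b) by (unfold b'; rewrite th_E, thiK by assumption; reflexivity).
  exists (thi y u ** b'). split; [apply D_mulr, Hu1 | split; [apply D_mulr, Hu2 | split]].
  - rewrite thM by assumption. unfold b'. rewrite !thiK by assumption.
    unfold u. rewrite mulaA, mulEa. reflexivity.
  - intro c. assert (Hb'c : D (invG y) (b' ** c)) by (apply D_mulr, Hb').
    rewrite mulaA, thM, thiK by assumption. unfold u. rewrite mulaA, <- HEb, <- thM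
      by (try apply D_E; assumption).
    rewrite <- mulaA, mulEa. reflexivity.
Qed.

Lemma cp_mul_assoc_fst x y z a b c : D x a -> D y b -> D z c ->
  wR (mulG x y) z (th (mulG x y) (thi (mulG x y) (wR x y (th x (thi x a ** b))) ** c)) =
  wR x (mulG y z) (th x (thi x a ** wR y z (th y (thi y b ** c)))).
Proof.
  intros Ha Hb Hc. assert (Ha' : D (invG x) (thi x a)) by (apply D_thi, Ha).
  destruct (D_th_thi_mul (y := z) Hb Hc) as [Ht Ht'].
  set (t := th y (thi y b ** c)) in *.
  rewrite <- wR_mull, w_cocycle
    by first [assumption | apply D_mulr; assumption | apply D_mull; assumption].
  f_equal.
  destruct (th_factor Ha' Hb) as (r & Hr & Hr' & Hab & Hac).
  assert (Hrc : D (invG y) (r ** c)) by (apply D_mulr, Hr).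
  assert (Hrc' : D (mulG (invG y) (invG x)) (r ** c)) by (apply D_mulr, Hr').
  unfold t. rewrite <- Hab, <- Hac, !wR_th_th by assumption.
  apply th_thi_wL_mul; assumption.
Qed.

(** * The crossed products *)

Local Notation cpm := (cp_mul mulG mulA th thi wR).
Local Notation ecpm := (ecp_mul mulG mulA th thi).
Local Notation pi := (cp_pi mulA invA).

Lemma cp_closed p q : CP D p -> CP D q -> CP D (cpm p q).
Proof.
  destruct p as [a x], q as [b y]. unfold CP, cp_mul. simpl. intros Ha Hb.
  destruct (D_th_thi_mul (y := y) Ha Hb) as [H H']. apply wR_in; assumption.
Qed.

Lemma cp_assoc p q r : CP D p -> CP D q -> CP D r -> cpm (cpm p q) r = cpm p (cpm q r).
Proof.
  destruct p as [a x], q as [b y], r as [c z]. unfold CP, cp_mul. simpl. intros.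
  rewrite cp_mul_assoc_fst, mulgA by assumption. reflexivity.
Qed.

Lemma cp_mul1l a b x : D x b -> cpm (a, oneG) (b, x) = (a ** b, x).
Proof.
  intro Hb. unfold cp_mul. simpl. rewrite thi1, th1, mul1g, wR1g by (apply D_mull, Hb).
  reflexivity.
Qed.

Lemma cp_mulr1 p e : CP D p -> cpm p (e, oneG) = (th (snd p) (thi (snd p) (fst p) ** e), snd p).
Proof.
  destruct p as [b y]. unfold CP. simpl. intro Hb. unfold cp_mul. simpl. rewrite mulg1.
  rewrite wRg1 by (apply D_th, D_mulr, D_thi, Hb). reflexivity.
Qed.

Lemma cp_idem p : cpm p p = p -> snd p = oneG /\ fst p ** fst p = fst p.
Proof.
  destruct p as [a x]. intro Hp.
  assert (Hx : x = oneG) by (apply idemg_eq1; exact (f_equal snd Hp)).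
  subst x. rewrite cp_mul1l in Hp by apply D1. injection Hp. auto.
Qed.

Lemma cp_idem_comm e f : CP D e -> CP D f -> cpm e e = e -> cpm f f = f ->
  cpm e f = cpm f e.
Proof.
  intros _ _ He Hf. destruct (cp_idem He) as [He1 He2], (cp_idem Hf) as [Hf1 Hf2].
  destruct e as [e x], f as [f y]. simpl in *. subst x y.
  rewrite !cp_mul1l, (idem_central He2) by apply D1. reflexivity.
Qed.

Definition cp_inv (p : A * G) : A * G :=
  let '(a, x) := p in
  ((thi x a)^-1 ** thi x (wiR x (invG x) (E a)), invG x).

Lemma D_cp_inv a x : D x a -> D (invG x) (fst (cp_inv (a, x))).
Proof. intro Ha. apply D_mulr, D_inv, D_thi, Ha. Qed.

Lemma cp_mul_inv a x : D x a -> cpm (a, x) (cp_inv (a, x)) = (E a, oneG).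
Proof.
  intro Ha. unfold cp_mul. simpl. rewrite mulgV.
  assert (HEa : D x (E a)) by (apply D_E, Ha).
  assert (HEa' : D (mulG x (invG x)) (E a)) by (rewrite mulgV; apply D1).
  set (k := wiR x (invG x) (E a)).
  destruct (wiR_in HEa HEa') as [Hk _]. fold k in Hk.
  assert (HEk : E (thi x k) = E (thi x a)).
  { rewrite <- !thi_E by assumption. unfold k. rewrite wiR_E, E_E by assumption. reflexivity. }
  rewrite <- mulaA, <- HEk, mulEa, thiK by assumption. unfold k. rewrite wiRK by assumption.
  reflexivity.
Qed.

Lemma cp_inv_mul_idem a x : D x a -> cpm (cp_inv (a, x)) (E a, oneG) = cp_inv (a, x).
Proof.
  intro Ha. rewrite cp_mulr1 by (apply D_cp_inv, Ha). simpl. f_equal.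
  assert (Hb : D (invG x) ((thi x a)^-1 ** thi x (wiR x (invG x) (E a))))
    by (apply D_cp_inv, Ha).
  assert (HEa : D (invG (invG x)) (E a)) by (rewrite invgK; apply D_E, Ha).
  rewrite thM, thiK by (try apply D_thi; assumption).
  rewrite th_inv_idem, thi_E by first [apply D_E, Ha | apply idem_mulaV | exact Ha].
  rewrite mulaA, <- (idem_central (idem_mulaV (thi x a))), <- mulaA, mulVE. reflexivity.
Qed.

Lemma cp_regular p : CP D p -> exists q, CP D q /\ cpm (cpm p q) p = p /\ cpm (cpm q p) q = q.
Proof.
  destruct p as [a x]. unfold CP. simpl. intro Ha.
  exists (cp_inv (a, x)). split; [apply D_cp_inv, Ha | split].
  - rewrite cp_mul_inv, cp_mul1l, mulEa by exact Ha. reflexivity.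
  - rewrite cp_assoc, cp_mul_inv, cp_inv_mul_idem by (try apply D_cp_inv; exact Ha).
    reflexivity.
Qed.

Lemma cp_inv_semigroup : IsInvSemigroupOn (CP D) cpm.
Proof.
  apply inv_semigroup_of_regular.
  - exact cp_closed.
  - exact cp_assoc.
  - exact cp_idem_comm.
  - exact cp_regular.
Qed.

Lemma ECP_CP p : ECP mulA D p -> CP D p.
Proof. intros [Hp _]. exact Hp. Qed.

Lemma pi_ECP p : CP D p -> ECP mulA D (pi p).
Proof. destruct p as [a x]. intro Ha. split; [apply D_E, Ha | apply idem_mulaV]. Qed.

Lemma pi_id p : ECP mulA D p -> pi p = p.
Proof.
  destruct p as [e x]. intros [_ He]. unfold cp_pi. simpl. rewrite E_idem by exact He.
  reflexivity.
Qed.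

Lemma pi_mul p q : CP D p -> CP D q -> pi (cpm p q) = ecpm (pi p) (pi q).
Proof.
  destruct p as [a x], q as [b y]. unfold CP, cp_mul, ecp_mul, cp_pi. simpl. intros Ha Hb.
  destruct (D_th_thi_mul (y := y) Ha Hb) as [H H'].
  rewrite wR_E, <- th_E, E_mul, thi_E by (try apply D_mulr, D_thi; assumption). reflexivity.
Qed.

Lemma pi_epi : IsEpiOn (CP D) cpm (ECP mulA D) ecpm pi.
Proof.
  split; [split; [exact pi_ECP | exact pi_mul] |].
  intros q Hq. exists q. split; [apply ECP_CP, Hq | apply pi_id, Hq].
Qed.

Lemma ecp_mul1 e f : ecpm (e, oneG) (f, oneG) = (e ** f, oneG).
Proof. unfold ecp_mul. simpl. rewrite thi1, th1, mul1g. reflexivity. Qed.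

Lemma ecp_idem p : ecpm p p = p -> snd p = oneG.
Proof. intro Hp. apply idemg_eq1. exact (f_equal snd Hp). Qed.

Lemma ecp_idem_comm e f : ECP mulA D e -> ECP mulA D f -> ecpm e e = e -> ecpm f f = f ->
  ecpm e f = ecpm f e.
Proof.
  intros [_ He] _ Hee Hff. destruct e as [e x], f as [f y].
  apply ecp_idem in Hee, Hff. simpl in *. subst x y.
  rewrite !ecp_mul1, (idem_central He). reflexivity.
Qed.

Lemma ecp_inv_semigroup : IsInvSemigroupOn (ECP mulA D) ecpm.
Proof.
  apply (inv_semigroup_retract cp_inv_semigroup ECP_CP (proj1 pi_epi) pi_id ecp_idem_comm).
Qed.

Lemma cp_i_mono : IsMonoOn (full A) mulA (CP D) cpm (cp_i oneG).
Proof.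
  split; [split |].
  - intros a _. apply D1.
  - intros a b _ _. unfold cp_i. rewrite cp_mul1l by apply D1. reflexivity.
  - intros a b _ _ Hab. injection Hab. auto.
Qed.

Lemma cp_j_epi : IsEpiOn (CP D) cpm (full G) mulG cp_j.
Proof.
  split; [split; [intros; exact I | reflexivity] |].
  intros x _. destruct (D_nonempty x) as [a Ha]. exists (a, x). split; [exact Ha | reflexivity].
Qed.

Lemma cp_j_kernel u : CP D u -> (cp_j u = oneG <-> exists a, cp_i oneG a = u).
Proof.
  destruct u as [a x]. intros _. unfold cp_j, cp_i. simpl. split.
  - intros ->. exists a. reflexivity.
  - intros [b Hb]. injection Hb. auto.
Qed.

Lemma kappa_epi : IsEpiOn (ECP mulA D) ecpm (full G) mulG cp_kappa.
Proof.
  split; [split; [intros; exact I | reflexivity] |].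
  intros x _. destruct (D_nonempty x) as [a Ha].
  exists (E a, x). split; [apply (pi_ECP (p := (a, x))), Ha | reflexivity].
Qed.

Lemma pi_idem_separating : IsIdempotentSeparatingOn (CP D) cpm pi.
Proof.
  intros [a x] [b y] [_ He] [_ Hf] Hpi.
  destruct (cp_idem He) as [Hx Ha], (cp_idem Hf) as [Hy Hb]. simpl in *. subst x y.
  rewrite <- (pi_id (p := (a, oneG))), <- (pi_id (p := (b, oneG)))
    by (split; [apply D1 | assumption]).
  exact Hpi.
Qed.

Lemma pi_kernel u : CP D u ->
  (IsIdempotentOn (ECP mulA D) ecpm (pi u) <-> exists a, cp_i oneG a = u).
Proof.
  destruct u as [a x]. intros _. unfold cp_i. split.
  - intros [_ Hidem]. apply ecp_idem in Hidem. simpl in Hidem. subst x. exists a. reflexivity.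
  - intros [b Hb]. injection Hb as <- <-. split; [apply (pi_ECP (p := (b, oneG))), D1 |].
    unfold cp_pi. simpl. rewrite ecp_mul1, idem_mulaV. reflexivity.
Qed.

Lemma cp_extension_by_group :
  IsExtensionByGroup mulA (CP D) cpm mulG oneG (cp_i oneG) cp_j.
Proof.
  split; [exact cp_inv_semigroup | split; [exact cp_i_mono | split]].
  - exact cp_j_epi.
  - exact cp_j_kernel.
Qed.

Lemma cp_extension_by_ecp :
  IsExtensionByInvSemigroup mulA (CP D) cpm (ECP mulA D) ecpm (cp_i oneG) pi.
Proof.
  split; [exact cp_inv_semigroup | split; [exact ecp_inv_semigroup | split]].
  - exact cp_i_mono.
  - split; [exact pi_epi | split; [exact pi_idem_separating | exact pi_kernel]].
Qed.

End CrossedProduct.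

Theorem proposition5p15
  (G : Type) (mulG : G -> G -> G) (oneG : G) (invG : G -> G)
  (HG : IsGroup mulG oneG invG)
  (A : Type) (mulA : A -> A -> A) (invA : A -> A)
  (HA : IsSemilatticeOfGroups mulA)
  (HinvA : forall a, mulA (mulA a (invA a)) a = a /\
                     mulA (mulA (invA a) a) (invA a) = invA a)
  (D : G -> A -> Prop) (th thi : G -> A -> A) (wL wR wiL wiR : G -> G -> A -> A)
  (HTheta : IsTwistedPartialAction mulG oneG invG mulA D th thi wL wR wiL wiR) :
  IsExtensionByGroup mulA (CP D) (cp_mul mulG mulA th thi wR) mulG oneG
    (cp_i oneG) cp_j /\
  IsEpiOn (CP D) (cp_mul mulG mulA th thi wR) (ECP mulA D) (ecp_mul mulG mulA th thi)
    (cp_pi mulA invA) /\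
  IsEpiOn (ECP mulA D) (ecp_mul mulG mulA th thi) (full G) mulG cp_kappa /\
  IsExtensionByInvSemigroup mulA (CP D) (cp_mul mulG mulA th thi wR)
    (ECP mulA D) (ecp_mul mulG mulA th thi) (cp_i oneG) (cp_pi mulA invA) /\
  (forall u, CP D u -> cp_j u = cp_kappa (cp_pi mulA invA u)).
Proof.
  split; [| split; [| split; [| split]]].
  - eapply cp_extension_by_group; eassumption.
  - eapply pi_epi; eassumption.
  - eapply kappa_epi; eassumption.
  - eapply cp_extension_by_ecp; eassumption.
  - reflexivity.
Qed.
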